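(* Let $A\in\mathbb{R}^{m\times n}$ with $\operatorname{rk}(A)=m$, $b\in\mathbb{R}^m$, $P=\{x\in\mathbb{R}^n: Ax=b,\ x\ge\mathbb{0}\}$. Let $B\subseteq[n]$ be a feasible basis, $N=[n]\setminus B$, $x^*=(A_B^{-1}b,\mathbb{0}_N)\in P$, and let $x^{(0)}$ be a vertex of $P$. Consider the following procedure: for $t=0,1,\dots$, while $x^{(t)}\ne x^*$, take a conformal circuit decomposition $x^*-x^{(t)}=\sum_{j=1}^k h^{(j)}$ with $k\le n-m$, choose $g^{(t)}=h^{(j)}$ for some $j$ maximizing $\|h^{(j)}_N\|_1$, and set $x^{(t+1)}=\operatorname{aug}_P(x^{(t)},g^{(t)})$. Then for every iteration $t\ge 0$ of this procedure, $\|x^{(t+1)}_N\|_1\le\big(1-\frac{1}{n-m}\big)\|x^{(t)}_N\|_1$, and $|x^{(t+1)}_i-x^{(t)}_i|\le(n-m)|x^*_i-x^{(t)}_i|$ for all $i\in[n]$.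
   Context: An elementary vector of $\ker(A)$ is a nonzero $g\in\ker(A)$ with inclusion-minimal support among nonzero vectors of $\ker(A)$. Vectors $x,y$ are sign-compatible if $x_iy_i\ge0$ for all $i$; $x\sqsubseteq y$ means they are sign-compatible and $|x_i|\le|y_i|$ for all $i$. A conformal circuit decomposition of $x\in\ker(A)$ is an expression $x=\sum_{j=1}^k h^{(j)}$ with each $h^{(j)}$ an elementary vector of $\ker(A)$ and $h^{(j)}\sqsubseteq x$ (one with $k\le\dim\ker(A)=n-m$ always exists). For $x\in P$ and elementary $g$, $\operatorname{aug}_P(x,g)=x+\alpha g$ with $\alpha=\max\{\bar\alpha: x+\bar\alpha g\in P\}$. *)

(* Vectors in R^n are column vectors 'cV[R]_n; x i 0 is x_i. *)
From mathcomp Require Import all_boot all_order all_algebra.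
From mathcomp Require Import reals.
Set Implicit Arguments. Unset Strict Implicit. Unset Printing Implicit Defensive.
Import Order.TTheory GRing.Theory Num.Theory.
Local Open Scope ring_scope.

Section Defs.
Variables (R : realType) (m n : nat).
Implicit Types (A : 'M[R]_(m, n)) (b : 'cV[R]_m) (x y g h : 'cV[R]_n).

Definition inP A b x : Prop := A *m x = b /\ forall i, 0 <= x i 0.

Definition vertexP A b x : Prop :=
  inP A b x /\
  forall y z (lam : R), inP A b y -> inP A b z -> 0 < lam < 1 ->
    x = lam *: y + (1 - lam) *: z -> y = z.

Definition colsubB A (B : {set 'I_n}) : 'M[R]_(m, #|B|) :=
  \matrix_(i, j) A i (enum_val j).

Definition is_basis A (B : {set 'I_n}) : Prop :=
  #|B| = m /\ \rank (colsubB A B) = m.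

Definition supp x : {set 'I_n} := [set i | x i 0 != 0].

Definition elementary A g : Prop :=
  g != 0 /\ A *m g = 0 /\
  forall h, h != 0 -> A *m h = 0 -> supp h \subset supp g -> supp h = supp g.

Definition conf_le x y : Prop :=
  forall i, 0 <= x i 0 * y i 0 /\ `|x i 0| <= `|y i 0|.

Definition conf_circ_decomp A x (hs : seq 'cV[R]_n) : Prop :=
  (size hs <= n - m)%N /\
  (forall h, h \in hs -> elementary A h /\ conf_le h x) /\
  \sum_(h <- hs) h = x.

Definition is_aug A b x g y : Prop :=
  exists alpha : R,
    [/\ inP A b (x + alpha *: g),
        (forall a : R, inP A b (x + a *: g) -> a <= alpha) &
        y = x + alpha *: g].

Definition normN (B : {set 'I_n}) x : R := \sum_(i | i \notin B) `|x i 0|.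

End Defs.

From mathcomp Require Import all_boot all_order all_algebra.
From mathcomp Require Import reals.
From mathcomp Require Import lra.
Set Implicit Arguments. Unset Strict Implicit. Unset Printing Implicit Defensive.
Import Order.TTheory GRing.Theory Num.Theory.
Local Open Scope ring_scope.

(* Write x = x^(t), g = g^(t) and x^(t+1) = x + alpha g.  Every circuit h of
   the decomposition satisfies h ⊑ x* - x, so x + h lies coordinatewise between
   x and x* and hence in P: thus alpha >= 1.  Since x*_N = 0, every circuit is
   nonpositive on N, so ||x_N||_1 = sum_h ||h_N||_1 <= (n - m) ||g_N||_1, and
   ||x_N||_1 > 0 because x - x* in ker A vanishing on N must be 0 (A_B is
   nonsingular).  As x + alpha g >= 0 and g_N <= 0,
   0 <= ||(x + alpha g)_N||_1 = ||x_N||_1 - alpha ||g_N||_1, which forces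
   alpha <= n - m, whence the coordinate bound, and with alpha >= 1 gives the
   contraction by 1 - 1/(n - m). *)

Lemma sumr_seq_le_mul_size (R : numDomainType) (T : eqType) (s : seq T)
    (F : T -> R) (c : R) :
  (forall x, x \in s -> F x <= c) -> \sum_(x <- s) F x <= c *+ size s.
Proof.
move=> leFc; rewrite -count_predT -iter_addr_0 -(big_const_seq _ _ s).
by rewrite big_seq [leRHS]big_seq; apply: ler_sum.
Qed.

Lemma conf_scalar_nonpos (R : realDomainType) (h d : R) :
  0 <= h * d -> `|h| <= `|d| -> d <= 0 -> h <= 0.
Proof.
move=> hd0 lehd; rewrite le_eqVlt => /predU1P [d0 | dlt0].
  by move: lehd; rewrite d0 normr0 normr_le0 => /eqP ->.
by rewrite -(nmulr_rge0 _ dlt0) mulrC.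
Qed.

Lemma conf_scalar_addr_ge0 (R : realDomainType) (x y g : R) :
  0 <= x -> 0 <= y -> 0 <= g * (y - x) -> `|g| <= `|y - x| -> 0 <= x + g.
Proof.
move=> x0 y0 gd0 legd; have [g0 | glt0] := lerP 0 g; first exact: addr_ge0.
have dle0 : y - x <= 0 by rewrite -(nmulr_rge0 _ glt0).
by move: legd; rewrite (ltr0_norm glt0) (ler0_norm dle0); lra.
Qed.

Section AugmentationStep.
Variables (R : realType) (m n : nat) (A : 'M[R]_(m, n)) (b : 'cV[R]_m).
Variables (B : {set 'I_n}).
Implicit Types (x y xstar g h : 'cV[R]_n).

Lemma basis_supported_ker_eq0 (d : 'cV[R]_n) :
  is_basis A B -> A *m d = 0 -> (forall i, i \notin B -> d i 0 = 0) -> d = 0.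
Proof.
move=> [cardB rankB] Ad0 dN0.
pose dB : 'rV[R]_#|B| := \row_j d (enum_val j) 0.
have dB_ker : dB *m (colsubB A B)^T = 0 *m (colsubB A B)^T.
  apply/matrixP => i j; rewrite (ord1 i) mul0mx [RHS]mxE.
  have := congr1 (fun M : 'M[R]_(m, 1) => M j 0) Ad0; rewrite [RHS]mxE => <-.
  rewrite !mxE [RHS](bigID (mem B)) /=.
  rewrite [X in _ = _ + X]big1 => [|k /dN0 ->]; last by rewrite mulr0.
  rewrite addr0 [RHS]big_enum_val; apply: eq_bigr => k _.
  by rewrite !mxE mulrC.
have free_AB : row_free (colsubB A B)^T by rewrite /row_free mxrank_tr rankB cardB.
have dB0 := row_free_inj free_AB dB_ker.
apply/matrixP => i j; rewrite (ord1 j) mxE.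
have [iB | /dN0 //] := boolP (i \in B).
have := congr1 (fun M : 'rV[R]_#|B| => M 0 (enum_rank_in iB i)) dB0.
by rewrite !mxE enum_rankK_in.
Qed.

Lemma inP_add_conf x y g :
  inP A b x -> inP A b y -> A *m g = 0 -> conf_le g (y - x) -> inP A b (x + g).
Proof.
move=> [Ax x0] [_ y0] Ag gxy; split; first by rewrite mulmxDr Ag addr0.
move=> i; have [] := gxy i; rewrite !mxE.
exact: conf_scalar_addr_ge0.
Qed.

Lemma conf_sub_offB_nonpos x y h i :
  inP A b x -> (forall i, i \notin B -> y i 0 = 0) -> conf_le h (y - x) ->
  i \notin B -> h i 0 <= 0.
Proof.
move=> [_ x0] yN0 hxy iB; have [] := hxy i; rewrite !mxE yN0 // sub0r.
by move=> hd lehd; apply: conf_scalar_nonpos hd lehd _; rewrite oppr_le0.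
Qed.

Lemma normN_ge0 x : 0 <= normN B x.
Proof. exact: sumr_ge0. Qed.

Lemma normN_subl_offB0 x y :
  (forall i, i \notin B -> y i 0 = 0) -> normN B (y - x) = normN B x.
Proof.
move=> yN0; apply: eq_bigr => i iB.
by rewrite !mxE yN0 // sub0r normrN.
Qed.

Lemma normN_sum_offB_nonpos (hs : seq 'cV[R]_n) :
  (forall h, h \in hs -> forall i, i \notin B -> h i 0 <= 0) ->
  normN B (\sum_(h <- hs) h) = \sum_(h <- hs) normN B h.
Proof.
move=> hsN; rewrite /normN exchange_big /=; apply: eq_bigr => i iB.
rewrite summxE ler0_norm; last by rewrite big_seq sumr_le0 // => h /hsN->.
by rewrite -sumrN big_seq [RHS]big_seq; apply: eq_bigr => h /hsN/(_ i iB)/ler0_norm.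
Qed.

Lemma normN_addr_scale x g (a : R) :
  (forall i, i \notin B -> [/\ 0 <= x i 0, 0 <= (x + a *: g) i 0 & g i 0 <= 0]) ->
  normN B (x + a *: g) = normN B x - a * normN B g.
Proof.
move=> signs; rewrite /normN mulr_sumr -sumrB; apply: eq_bigr => i /signs[x0 y0 g0].
by rewrite (ger0_norm y0) (ger0_norm x0) (ler0_norm g0) !mxE mulrN opprK.
Qed.

Lemma normN_gt0 x xstar :
  is_basis A B -> A *m xstar = b -> (forall i, i \notin B -> xstar i 0 = 0) ->
  A *m x = b -> x != xstar -> 0 < normN B x.
Proof.
move=> isB Axs xsN0 Ax; rewrite lt_def normN_ge0 andbT; apply: contra => /eqP xN_0.
have xN0 i : i \notin B -> x i 0 = 0.
  move=> iB; apply/eqP/normr0P.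
  exact: (psumr_eq0P (P := fun k => k \notin B) (F := fun k => `|x k 0|)) iB.
have /eqP : x - xstar = 0.
  apply: basis_supported_ker_eq0 isB _ _; first by rewrite mulmxBr Axs Ax subrr.
  by move=> i iB; rewrite !mxE xsN0 // xN0 // subrr.
by rewrite subr_eq0.
Qed.

Lemma conf_circ_decomp_offB_nonpos x xstar (hs : seq 'cV[R]_n) :
  inP A b x -> (forall i, i \notin B -> xstar i 0 = 0) ->
  conf_circ_decomp A (xstar - x) hs ->
  forall h, h \in hs -> forall i, i \notin B -> h i 0 <= 0.
Proof.
move=> xP xsN0 [_ [hs_circ _]] h /hs_circ[_ h_conf] i.
exact: conf_sub_offB_nonpos xP xsN0 h_conf.
Qed.

Lemma normN_le_conf_circ_max x xstar (hs : seq 'cV[R]_n) g :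
  inP A b x -> (forall i, i \notin B -> xstar i 0 = 0) ->
  conf_circ_decomp A (xstar - x) hs ->
  (forall h, h \in hs -> normN B h <= normN B g) ->
  normN B x <= (n - m)%:R * normN B g.
Proof.
move=> xP xsN0 hs_dec g_max; have [size_hs [_ hs_sum]] := hs_dec.
rewrite -(normN_subl_offB0 x xsN0) -hs_sum.
rewrite normN_sum_offB_nonpos; last exact: conf_circ_decomp_offB_nonpos hs_dec.
rewrite (le_trans (sumr_seq_le_mul_size g_max)) // mulr_natl.
exact: ler_wpMn2l (normN_ge0 g) _ _ size_hs.
Qed.

Lemma aug_step_bounds x xstar (hs : seq 'cV[R]_n) g y :
  is_basis A B -> inP A b x -> inP A b xstar ->
  (forall i, i \notin B -> xstar i 0 = 0) -> x != xstar ->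
  conf_circ_decomp A (xstar - x) hs -> g \in hs ->
  (forall h, h \in hs -> normN B h <= normN B g) -> is_aug A b x g y ->
  normN B y <= (1 - ((n - m)%:R)^-1) * normN B x /\
  (forall i, `|y i 0 - x i 0| <= (n - m)%:R * `|xstar i 0 - x i 0|).
Proof.
move=> isB xP xsP xsN0 x_neq hs_dec g_hs g_max [a [yP a_max ->]].
have [[_ [Ag _]] g_conf] := hs_dec.2.1 g g_hs.
have a_ge1 : 1 <= a by apply: a_max; rewrite scale1r; exact: inP_add_conf xP xsP Ag g_conf.
have xN_le := normN_le_conf_circ_max xP xsN0 hs_dec g_max.
have yN_eq : normN B (x + a *: g) = normN B x - a * normN B g.
  apply: normN_addr_scale => i iB; split; [by case: xP | by case: yP |].
  exact: conf_circ_decomp_offB_nonpos xP xsN0 hs_dec g g_hs i iB.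
have xN_gt0 : 0 < normN B x := normN_gt0 isB xsP.1 xsN0 xP.1 x_neq.
set K : R := (n - m)%:R in xN_le *.
have yN_ge0 := normN_ge0 (x + a *: g).
set X := normN B x in xN_le yN_eq xN_gt0 *; set G := normN B g in xN_le yN_eq *.
have G_gt0 : 0 < G.
  rewrite lt_def normN_ge0 andbT; apply: contraTneq xN_le => ->.
  by rewrite mulr0 -ltNge.
have K_gt0 : 0 < K by rewrite -(pmulr_lgt0 _ G_gt0) (lt_le_trans xN_gt0 xN_le).
have a_leK : a <= K by rewrite -(ler_pM2r G_gt0) (le_trans _ xN_le) //; lra.
split.
  rewrite yN_eq mulrBl mul1r lerD2l lerN2 mulrC.
  have XK_le : X / K <= G by rewrite ler_pdivrMr // mulrC.
  exact: le_trans XK_le (ler_peMl (ltW G_gt0) a_ge1).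
move=> i; rewrite !mxE addrAC subrr add0r normrM ger0_norm; last by lra.
have [_] := g_conf i; rewrite !mxE => g_le.
apply: le_trans (ler_wpM2r (normr_ge0 _) a_leK) _.
by rewrite ler_wpM2l // ltW.
Qed.

End AugmentationStep.

Theorem lemma3p1 (R : realType) (m n : nat) (A : 'M[R]_(m, n)) (b : 'cV[R]_m)
    (B : {set 'I_n}) (xstar : 'cV[R]_n) (xs : nat -> 'cV[R]_n) :
  \rank A = m ->
  is_basis A B ->
  (* x* = (A_B^{-1} b, 0_N), and B is feasible: x* \in P *)
  A *m xstar = b -> (forall i, i \notin B -> xstar i 0 = 0) -> inP A b xstar ->
  vertexP A b (xs 0%N) ->
  (* the procedure: at each iteration t with x^(0), ..., x^(t) <> x* *)
  (forall t : nat, (forall s, (s <= t)%N -> xs s != xstar) ->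
     exists hs : seq 'cV[R]_n,
       conf_circ_decomp A (xstar - xs t) hs /\
       exists g, [/\ g \in hs,
                     (forall h, h \in hs -> normN B h <= normN B g) &
                     is_aug A b (xs t) g (xs t.+1)]) ->
  forall t : nat, (forall s, (s <= t)%N -> xs s != xstar) ->
    normN B (xs t.+1) <= (1 - ((n - m)%:R)^-1) * normN B (xs t) /\
    (forall i, `|xs t.+1 i 0 - xs t i 0| <= (n - m)%:R * `|xstar i 0 - xs t i 0|).
Proof.
move=> _ isB _ xsN0 xsP [x0P _] step t xs_neq.
have xtP : inP A b (xs t).
  case: t xs_neq => [//|t] xs_neq.
  have [_ [_ [g [_ _ [a [yP _ ->]]]]]] := step t (fun s le_st => xs_neq s (leqW le_st)).
  exact: yP.
have [hs [hs_dec [g [g_hs g_max g_aug]]]] := step t xs_neq.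
exact: aug_step_bounds isB xtP xsP xsN0 (xs_neq t (leqnn t)) hs_dec g_hs g_max g_aug.
Qed.
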